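(* Let $\alpha>0$ and consider the equilibria of $$\frac{d}{dt}v_n=-n^2v_n+\alpha v_n-2v_n\|v\|_H^2+v_n|v_n|^2,\quad n\in\mathbb Z.$$ Then every equilibrium having two or more nonzero components ($v_m\ne0$ and $v_k\ne0$ for some $m\ne k$) is unstable. The only stable equilibria are the one-component ones: $v_n=0$ for $n\ne k$, $v_k\ne0$, with $k^2<\frac{\alpha}{2}$.
   Context: $e_n=e^{inx}$, $H=L^2_{per}(-\pi,\pi)$ complex-valued, $v=\sum v_ne_n$, $\|v\|_H^2=\sum|v_n|^2$. The system is invariant under $v_n\mapsto e^{i\phi_n}v_n$, so each equilibrium may be rotated to a real one; (in)stability is understood for the real-valued system, via its linearization at a real equilibrium $v$ on real perturbations, $\frac d{dt}\theta_n=-n^2\theta_n+\alpha\theta_n-2\theta_n\|v\|_H^2-4v_n(v,\theta)+3\theta_nv_n^2$: unstable if this operator has a positive part of the spectrum, stable if all its eigenvalues are negative. *)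

From Stdlib Require Import Reals ZArith.
From Coquelicot Require Import Coquelicot.
Open Scope R_scope.

(* Sums over Z are split into the nonnegative indices k and the negative
   indices -(k+1), k : nat. *)
Definition zseries (f : Z -> R) : nat -> R :=
  fun k => f (Z.of_nat k) + f (- Z.of_nat (S k))%Z.

Definition in_H (v : Z -> R) : Prop := ex_series (zseries (fun n => (v n)^2)).

Definition normH2 (v : Z -> R) : R := Series (zseries (fun n => (v n)^2)).

Definition innerH (v th : Z -> R) : R := Series (zseries (fun n => v n * th n)).

Definition equilibrium (alpha : R) (v : Z -> R) : Prop :=
  in_H v /\
  forall n : Z,
    - (IZR n)^2 * v n + alpha * v n - 2 * v n * normH2 v + v n * (v n)^2 = 0.

(* The linearization at v, applied to a perturbation theta. *)
Definition linop (alpha : R) (v th : Z -> R) (n : Z) : R :=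
  - (IZR n)^2 * th n + alpha * th n - 2 * th n * normH2 v
  - 4 * v n * innerH v th + 3 * th n * (v n)^2.

Definition lin_eigenvalue (alpha : R) (v : Z -> R) (lam : R) : Prop :=
  exists th : Z -> R, in_H th /\ (exists n, th n <> 0) /\
    forall n, linop alpha v th n = lam * th n.

Definition unstable (alpha : R) (v : Z -> R) : Prop :=
  exists lam, 0 < lam /\ lin_eigenvalue alpha v lam.

Definition stable (alpha : R) (v : Z -> R) : Prop :=
  forall lam, lin_eigenvalue alpha v lam -> lam < 0.

From Stdlib Require Import Reals ZArith Lra Lia Ranalysis5 Classical.
From Coquelicot Require Import Coquelicot.
Open Scope R_scope.

(* At an equilibrium every nonzero component satisfies v_n^2 = n^2 - alpha + 2 |v|^2, so the
   support is finite and v_n^2 grows with |n|. On the support the linearization is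
   D - 4 v <v, .> with D = diag (2 v_n^2) > 0; off the support it is diagonal with entries
   alpha - n^2 - 2 |v|^2. With two nonzero components a positive eigenvalue exists: either
   two entries of D coincide, and v_k e_m - v_m e_k is an eigenvector orthogonal to v, or
   between two consecutive distinct entries a < b of D the secular equation
   4 sum_n v_n^2 / (2 v_n^2 - x) = 1 has a root, by the intermediate value theorem applied
   after clearing the poles at a and b. For one component at k, |v|^2 = alpha - k^2 and the
   spectrum is {-2 v_k^2} together with 2 k^2 - alpha - n^2 (n <> k), negative iff
   2 k^2 < alpha. *)

Lemma is_series_finite (a : nat -> R) (K : nat) :
  (forall j, (K < j)%nat -> a j = 0) -> is_series a (sum_f_R0 a K).
Proof.
  intros Ha. change (is_lim_seq (sum_n a) (sum_f_R0 a K)).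
  apply (is_lim_seq_ext_loc (fun _ => sum_f_R0 a K)); [|apply is_lim_seq_const].
  exists K. intros N HN. rewrite sum_n_Reals.
  induction HN as [|N HN IH]; [reflexivity|].
  simpl. rewrite <- IH, (Ha (S N)) by lia. ring.
Qed.

Lemma is_series_single (a : nat -> R) (i : nat) :
  (forall j, j <> i -> a j = 0) -> is_series a (a i).
Proof.
  intros Ha. replace (a i) with (sum_f_R0 a i).
  - apply is_series_finite. intros j Hj. apply Ha. lia.
  - destruct i as [|i]; [reflexivity|]. simpl.
    rewrite sum_eq_R0; [ring|]. intros j Hj. apply Ha. lia.
Qed.

Lemma is_series_zseries_single (f : Z -> R) (p : Z) :
  (forall n, n <> p -> f n = 0) -> is_series (zseries f) (f p).
Proof.
  intros Hf.
  set (i := if Z.leb 0 p then Z.to_nat p else Z.to_nat (- p - 1)).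
  replace (f p) with (zseries f i).
  - apply is_series_single. intros j Hj. unfold zseries, i in *.
    destruct (Z.leb_spec 0 p); rewrite !Hf by lia; ring.
  - unfold zseries, i. destruct (Z.leb_spec 0 p).
    + rewrite Z2Nat.id by lia. rewrite (Hf (- _)%Z) by lia. ring.
    + rewrite (Hf (Z.of_nat _)) by lia. rewrite Rplus_0_l. f_equal. lia.
Qed.

Lemma is_series_zseries_pair (f : Z -> R) (m k : Z) : m <> k ->
  (forall n, n <> m -> n <> k -> f n = 0) -> is_series (zseries f) (f m + f k).
Proof.
  intros Hmk Hf.
  set (g := fun n => if Z.eq_dec n m then f n else 0).
  set (h := fun n => if Z.eq_dec n m then 0 else f n).
  assert (Hg : is_series (zseries g) (f m)).
  { replace (f m) with (g m) by (unfold g; destruct Z.eq_dec; tauto).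
    apply is_series_zseries_single. intros n Hn. unfold g. destruct Z.eq_dec; tauto. }
  assert (Hh : is_series (zseries h) (f k)).
  { replace (f k) with (h k) by (unfold h; destruct Z.eq_dec; [congruence|reflexivity]).
    apply is_series_zseries_single. intros n Hn. unfold h.
    destruct Z.eq_dec; [reflexivity|]. apply Hf; assumption. }
  refine (is_series_ext _ _ _ _ (is_series_plus _ _ _ _ Hg Hh)).
  intros j. change (zseries g j + zseries h j = zseries f j).
  unfold zseries, g, h. destruct Z.eq_dec, Z.eq_dec; ring.
Qed.

Lemma is_series_zseries_finite (f : Z -> R) (K : nat) :
  (forall n, (K <= Z.abs_nat n)%nat -> f n = 0) ->
  is_series (zseries f) (sum_f_R0 (zseries f) K).
Proof.
  intros Hf. apply is_series_finite. intros j Hj. unfold zseries.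
  rewrite !Hf by lia. ring.
Qed.

Lemma Series_zseries_ge_term (f : Z -> R) (p : Z) :
  (forall n, 0 <= f n) -> ex_series (zseries f) -> f p <= Series (zseries f).
Proof.
  intros Hf Hex.
  set (g := fun n => if Z.eq_dec n p then f n else 0).
  replace (f p) with (Series (zseries g)).
  - apply Series_le; [|exact Hex]. intros j. unfold zseries, g.
    pose proof (Hf (Z.of_nat j)). pose proof (Hf (- Z.of_nat (S j))%Z).
    destruct Z.eq_dec, Z.eq_dec; lra.
  - apply is_series_unique.
    replace (f p) with (g p) by (unfold g; destruct Z.eq_dec; tauto).
    apply is_series_zseries_single. intros n Hn. unfold g. destruct Z.eq_dec; tauto.
Qed.

Lemma sum_zseries_ge_term (f : Z -> R) (K : nat) (p : Z) :
  (forall n, (K <= Z.abs_nat n)%nat -> f n = 0) -> (forall n, 0 <= f n) ->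
  f p <= sum_f_R0 (zseries f) K.
Proof.
  intros Hsupp Hf. pose proof (is_series_zseries_finite f K Hsupp) as Hs.
  rewrite <- (is_series_unique _ _ Hs).
  apply Series_zseries_ge_term; [exact Hf | eexists; exact Hs].
Qed.

Lemma sum_zseries_le_term (f : Z -> R) (K : nat) (p : Z) :
  (forall n, (K <= Z.abs_nat n)%nat -> f n = 0) -> (forall n, f n <= 0) ->
  sum_f_R0 (zseries f) K <= f p.
Proof.
  intros Hsupp Hf.
  assert (H := sum_zseries_ge_term (fun n => - f n) K p).
  rewrite (sum_eq _ (fun j => zseries f j * -1)), <- scal_sum in H
    by (intros; unfold zseries; ring).
  enough (- f p <= -1 * sum_f_R0 (zseries f) K) by lra.
  apply H; intros n; [intros Hn; rewrite Hsupp by exact Hn; ring|specialize (Hf n); lra].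
Qed.

Lemma normH2_ge_sq (v : Z -> R) (p : Z) : in_H v -> (v p)^2 <= normH2 v.
Proof.
  intros Hv. apply (Series_zseries_ge_term (fun n => (v n)^2)); [|exact Hv].
  intros n. apply pow2_ge_0.
Qed.

Lemma normH2_nonneg (v : Z -> R) : in_H v -> 0 <= normH2 v.
Proof.
  intros Hv. pose proof (normH2_ge_sq v 0 Hv). pose proof (pow2_ge_0 (v 0%Z)). lra.
Qed.

Lemma equilibrium_sq (alpha : R) (v : Z -> R) (n : Z) : equilibrium alpha v ->
  v n <> 0 -> (v n)^2 = (IZR n)^2 - alpha + 2 * normH2 v.
Proof.
  intros [_ Heq] Hn. specialize (Heq n).
  apply (Rmult_eq_reg_l (v n)); [|exact Hn]. lra.
Qed.

Lemma equilibrium_support_bound (alpha : R) (v : Z -> R) (n : Z) :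
  equilibrium alpha v -> v n <> 0 -> (IZR n)^2 + normH2 v <= alpha.
Proof.
  intros He Hn. pose proof (equilibrium_sq alpha v n He Hn).
  pose proof (normH2_ge_sq v n (proj1 He)). lra.
Qed.

Lemma equilibrium_finite_support (alpha : R) (v : Z -> R) : equilibrium alpha v ->
  exists K : nat, forall n, (K <= Z.abs_nat n)%nat -> v n = 0.
Proof.
  intros He. destruct (INR_unbounded alpha) as [K HK]. exists K.
  intros n Hn. destruct (Req_dec (v n) 0) as [E|E]; [exact E|exfalso].
  pose proof (equilibrium_support_bound alpha v n He E).
  pose proof (normH2_nonneg v (proj1 He)).
  assert (Hsq : IZR (Z.of_nat K) <= IZR (n * n)) by (apply IZR_le; nia).
  rewrite <- INR_IZR_INZ, mult_IZR in Hsq. lra.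
Qed.

Lemma equilibrium_abs_lt (alpha : R) (v : Z -> R) (n p : Z) : equilibrium alpha v ->
  v n <> 0 -> v p <> 0 -> (v n)^2 < (v p)^2 -> (Z.abs_nat n < Z.abs_nat p)%nat.
Proof.
  intros He Hn Hp Hlt.
  rewrite (equilibrium_sq alpha v n He Hn), (equilibrium_sq alpha v p He Hp) in Hlt.
  assert (Hsq : IZR (n * n) < IZR (p * p)) by (rewrite !mult_IZR; lra).
  apply lt_IZR in Hsq. nia.
Qed.

Lemma one_component_norm (alpha : R) (v : Z -> R) (k : Z) : equilibrium alpha v ->
  v k <> 0 -> (forall n, n <> k -> v n = 0) -> normH2 v = alpha - (IZR k)^2.
Proof.
  intros He Hk Hv.
  assert (HN : normH2 v = (v k)^2).
  { apply is_series_unique, (is_series_zseries_single (fun n => (v n)^2)).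
    intros n Hn. rewrite Hv by exact Hn. ring. }
  pose proof (equilibrium_sq alpha v k He Hk). lra.
Qed.

Lemma linop_on_support (alpha : R) (v th : Z -> R) (n : Z) : equilibrium alpha v ->
  v n <> 0 -> linop alpha v th n = 2 * (v n)^2 * th n - 4 * v n * innerH v th.
Proof.
  intros He Hn. unfold linop. rewrite (equilibrium_sq alpha v n He Hn). ring.
Qed.

Lemma lin_eigenvalue_on_support (alpha lam : R) (v th : Z -> R) (p : Z) :
  equilibrium alpha v -> in_H th -> th p <> 0 ->
  (forall n, v n = 0 -> th n = 0) ->
  (forall n, (2 * (v n)^2 - lam) * th n = 4 * v n * innerH v th) ->
  lin_eigenvalue alpha v lam.
Proof.
  intros He Hth Hp Hsupp Heig. exists th. split; [exact Hth|split; [exists p; exact Hp|]].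
  intros n. destruct (Req_dec (v n) 0) as [E|E].
  - unfold linop. rewrite (Hsupp n E), E. ring.
  - rewrite (linop_on_support alpha v th n He E). specialize (Heig n). lra.
Qed.

Definition unit_vec (p n : Z) : R := if Z.eq_dec n p then 1 else 0.

Lemma lin_eigenvalue_unit_vec (alpha : R) (v : Z -> R) (p : Z) : v p = 0 ->
  lin_eigenvalue alpha v (alpha - (IZR p)^2 - 2 * normH2 v).
Proof.
  intros Hp.
  assert (Hunit : forall f : Z -> R, is_series (zseries (fun n => f n * unit_vec p n)) (f p)).
  { intros f. replace (f p) with (f p * unit_vec p p)
      by (unfold unit_vec; destruct Z.eq_dec; [ring|tauto]).
    apply (is_series_zseries_single (fun n => f n * unit_vec p n)).
    intros n Hn. unfold unit_vec.
    destruct Z.eq_dec; [tauto|ring]. }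
  assert (Hin : innerH v (unit_vec p) = 0).
  { rewrite <- Hp. apply is_series_unique, Hunit. }
  exists (unit_vec p). split; [|split].
  - eexists. refine (is_series_ext _ _ _ _ (Hunit (unit_vec p))).
    intros j. unfold zseries. simpl. ring.
  - exists p. unfold unit_vec. destruct Z.eq_dec; [lra|tauto].
  - intros n. unfold linop. rewrite Hin. unfold unit_vec.
    destruct Z.eq_dec as [->|]; [rewrite Hp|]; ring.
Qed.

Lemma unstable_of_sq_eq (alpha : R) (v : Z -> R) (m k : Z) : equilibrium alpha v ->
  m <> k -> v m <> 0 -> v k <> 0 -> (v m)^2 = (v k)^2 -> unstable alpha v.
Proof.
  intros He Hmk Hm Hk Hsq.
  set (th := fun n => if Z.eq_dec n m then v k else if Z.eq_dec n k then - v m else 0).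
  assert (Hpair : forall f : Z -> R,
            is_series (zseries (fun n => f n * th n)) (f m * v k - f k * v m)).
  { intros f.
    replace (f m * v k - f k * v m) with (f m * th m + f k * th k)
      by (unfold th; destruct (Z.eq_dec m m), (Z.eq_dec k m), (Z.eq_dec k k);
          try congruence; ring).
    apply (is_series_zseries_pair (fun n => f n * th n)); [exact Hmk|].
    intros n Hnm Hnk. unfold th. cbv beta.
    destruct (Z.eq_dec n m); [contradiction|]. destruct (Z.eq_dec n k); [contradiction|]. ring. }
  assert (Hin : innerH v th = 0).
  { apply is_series_unique. replace 0 with (v m * v k - v k * v m) by ring. apply Hpair. }
  exists (2 * (v m)^2). split; [pose proof (pow2_gt_0 _ Hm); lra|].
  apply (lin_eigenvalue_on_support alpha _ v th m He).
  - eexists. refine (is_series_ext _ _ _ _ (Hpair th)). intros j. unfold zseries. simpl. ring.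
  - unfold th. destruct Z.eq_dec; tauto.
  - intros n Hn. unfold th. destruct Z.eq_dec as [->|]; [tauto|].
    destruct Z.eq_dec as [->|]; [tauto|reflexivity].
  - intros n. rewrite Hin. unfold th.
    destruct Z.eq_dec as [->|]; [|destruct Z.eq_dec as [->|]]; rewrite ?Hsq; ring.
Qed.

(* [(a - x) (b - x) / (d - x)], extended continuously across [x = d] when [d] is [a] or [b]. *)
Definition cancel_pole (a b d x : R) : R :=
  if Req_EM_T d a then b - x else if Req_EM_T d b then a - x
  else (a - x) * (b - x) / (d - x).

Lemma cancel_pole_mul (a b d x : R) : d <> x ->
  (d - x) * cancel_pole a b d x = (a - x) * (b - x).
Proof.
  intros Hdx. unfold cancel_pole.
  destruct Req_EM_T as [->|]; [ring|]. destruct Req_EM_T as [->|]; [ring|].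
  field. lra.
Qed.

Lemma cancel_pole_continuous (a b d x : R) : ~ (a < d < b) -> a <= x <= b ->
  continuity_pt (cancel_pole a b d) x.
Proof.
  intros Hd Hx. unfold cancel_pole.
  destruct Req_EM_T; [reg|]. destruct Req_EM_T; [reg|].
  reg. lra.
Qed.

Lemma cancel_pole_left_nonneg (a b d : R) : a <= b -> 0 <= cancel_pole a b d a.
Proof.
  intros Hab. unfold cancel_pole.
  destruct Req_EM_T; [lra|]. destruct Req_EM_T; [lra|].
  unfold Rdiv. rewrite Rminus_diag, !Rmult_0_l. lra.
Qed.

Lemma cancel_pole_right_nonpos (a b d : R) : a <= b -> cancel_pole a b d b <= 0.
Proof.
  intros Hab. unfold cancel_pole.
  destruct Req_EM_T; [lra|]. destruct Req_EM_T; [lra|].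
  unfold Rdiv. rewrite Rminus_diag, Rmult_0_r, !Rmult_0_l. lra.
Qed.

Lemma cancel_pole_left (a b : R) : cancel_pole a b a a = b - a.
Proof. unfold cancel_pole. destruct Req_EM_T; [reflexivity|congruence]. Qed.

Lemma cancel_pole_right (a b : R) : a <> b -> cancel_pole a b b b = a - b.
Proof.
  intros Hab. unfold cancel_pole.
  destruct Req_EM_T; [congruence|]. destruct Req_EM_T; [reflexivity|congruence].
Qed.

Section SecularEquation.

Variables (v : Z -> R) (K : nat) (m k : Z).
Hypothesis v_supp : forall n, (K <= Z.abs_nat n)%nat -> v n = 0.
Hypotheses (vm_neq0 : v m <> 0) (vk_neq0 : v k <> 0).
Hypothesis sq_lt : (v m)^2 < (v k)^2.
Hypothesis sq_gap : forall n, ~ ((v m)^2 < (v n)^2 < (v k)^2).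

Let a := 2 * (v m)^2.
Let b := 2 * (v k)^2.

Definition secular_term (x : R) (n : Z) : R := (v n)^2 * cancel_pole a b (2 * (v n)^2) x.

(* The secular equation [4 sum_n v_n^2 / (2 v_n^2 - x) = 1], multiplied by [(a - x) (b - x)]. *)
Definition secular (x : R) : R :=
  (a - x) * (b - x) - 4 * sum_f_R0 (zseries (secular_term x)) K.

Lemma pole_gap (n : Z) : ~ (a < 2 * (v n)^2 < b).
Proof. unfold a, b. intros Hn. apply (sq_gap n). lra. Qed.

Lemma secular_term_supp (x : R) (n : Z) :
  (K <= Z.abs_nat n)%nat -> secular_term x n = 0.
Proof. intros Hn. unfold secular_term. rewrite v_supp by exact Hn. ring. Qed.

Lemma secular_continuous (x : R) : a <= x <= b -> continuity_pt secular x.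
Proof.
  intros Hx. unfold secular. apply continuity_pt_minus; [reg|].
  apply continuity_pt_mult; [reg|].
  apply (continuity_pt_finite_SF (fun j y => zseries (secular_term y) j)).
  intros j _. unfold zseries, secular_term.
  apply continuity_pt_plus; (apply continuity_pt_mult; [reg|]);
    apply cancel_pole_continuous; [apply pole_gap|exact Hx|apply pole_gap|exact Hx].
Qed.

Lemma secular_left : secular a < 0.
Proof.
  assert (Hterm : secular_term a m <= sum_f_R0 (zseries (secular_term a)) K).
  { apply sum_zseries_ge_term; [exact (secular_term_supp a)|]. intros n. unfold secular_term.
    apply Rmult_le_pos; [apply pow2_ge_0|apply cancel_pole_left_nonneg; unfold a, b; lra]. }
  assert (Hm : secular_term a m = (v m)^2 * (b - a)).
  { unfold secular_term. fold a. rewrite cancel_pole_left. reflexivity. }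
  unfold secular. pose proof (pow2_gt_0 _ vm_neq0). assert (a < b) by (unfold a, b; lra).
  nra.
Qed.

Lemma secular_right : 0 < secular b.
Proof.
  assert (Hterm : sum_f_R0 (zseries (secular_term b)) K <= secular_term b k).
  { apply sum_zseries_le_term; [exact (secular_term_supp b)|]. intros n. unfold secular_term.
    pose proof (pow2_ge_0 (v n)).
    pose proof (cancel_pole_right_nonpos a b (2 * (v n)^2) ltac:(unfold a, b; lra)). nra. }
  assert (Hk : secular_term b k = (v k)^2 * (a - b)).
  { unfold secular_term. fold b. rewrite cancel_pole_right by (unfold a, b; lra).
    reflexivity. }
  unfold secular. pose proof (pow2_gt_0 _ vk_neq0). assert (a < b) by (unfold a, b; lra).
  nra.
Qed.

Lemma secular_root : exists z, a < z < b /\ secular z = 0.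
Proof.
  destruct (IVT_interv secular a b secular_continuous ltac:(unfold a, b; lra)
              secular_left secular_right) as [z [Hz Hroot]].
  exists z. split; [|exact Hroot].
  pose proof secular_left. pose proof secular_right.
  split; apply Rnot_le_lt; intros Hle.
  - replace z with a in Hroot by lra. lra.
  - replace z with b in Hroot by lra. lra.
Qed.

Lemma secular_eigenvector : exists z th,
  0 < z /\ in_H th /\ th m <> 0 /\ (forall n, v n = 0 -> th n = 0) /\
  forall n, (2 * (v n)^2 - z) * th n = 4 * v n * innerH v th.
Proof.
  destruct secular_root as [z [Hz Hroot]].
  assert (Hpole : forall n, 2 * (v n)^2 - z <> 0).
  { intros n E. apply (pole_gap n). lra. }
  set (th := fun n => v n / (2 * (v n)^2 - z)).
  assert (Hth : forall n, (2 * (v n)^2 - z) * th n = v n).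
  { intros n. unfold th. field. apply Hpole. }
  assert (Hth0 : forall n, v n = 0 -> th n = 0).
  { intros n Hn. unfold th. rewrite Hn. unfold Rdiv. ring. }
  assert (Hterm : forall n, secular_term z n = (a - z) * (b - z) * (v n * th n)).
  { intros n. unfold secular_term. apply (Rmult_eq_reg_l (2 * (v n)^2 - z)); [|apply Hpole].
    rewrite Rmult_comm, Rmult_assoc, (Rmult_comm _ (2 * _ - z)), cancel_pole_mul
      by (intros E; apply (Hpole n); lra).
    transitivity ((a - z) * (b - z) * v n * ((2 * (v n)^2 - z) * th n)); [rewrite Hth|]; ring. }
  assert (Hinner : innerH v th = sum_f_R0 (zseries (fun n => v n * th n)) K).
  { apply is_series_unique, is_series_zseries_finite.
    intros n Hn. rewrite v_supp by exact Hn. ring. }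
  assert (Hsum : sum_f_R0 (zseries (secular_term z)) K = (a - z) * (b - z) * innerH v th).
  { rewrite Hinner, scal_sum. apply sum_eq. intros j _. unfold zseries. rewrite !Hterm. ring. }
  assert (Hinner4 : 4 * innerH v th = 1).
  { unfold secular in Hroot. rewrite Hsum in Hroot.
    apply (Rmult_eq_reg_l ((a - z) * (b - z))); [lra|]. apply Rmult_integral_contrapositive_currified; lra. }
  exists z, th. split; [|split; [|split; [|split]]].
  - pose proof (pow2_gt_0 _ vm_neq0). unfold a in Hz. lra.
  - eexists. apply is_series_zseries_finite. intros n Hn. rewrite Hth0 by (apply v_supp, Hn). ring.
  - unfold th. apply Rmult_integral_contrapositive_currified; [exact vm_neq0|].
    apply Rinv_neq_0_compat, Hpole.
  - exact Hth0.
  - intros n. rewrite Hth, Rmult_assoc, (Rmult_comm (v n)), <- Rmult_assoc, Hinner4. ring.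
Qed.

End SecularEquation.

Lemma exists_next_sq (alpha : R) (v : Z -> R) (m k : Z) : equilibrium alpha v ->
  v k <> 0 -> (v m)^2 < (v k)^2 ->
  exists k', v k' <> 0 /\ (v m)^2 < (v k')^2 /\
             forall n, ~ ((v m)^2 < (v n)^2 < (v k')^2).
Proof.
  intros He Hk Hlt.
  set (P := fun q => exists n, Z.abs_nat n = q /\ v n <> 0 /\ (v m)^2 < (v n)^2).
  destruct (dec_inh_nat_subset_has_unique_least_element P (fun q => classic (P q)))
    as [q [[[k' [Hq [Hk' Hlt']]] Hmin] _]]; [exists (Z.abs_nat k), k; auto|].
  exists k'. split; [exact Hk'|split; [exact Hlt'|]].
  intros n [Hmn Hnk].
  assert (Hn : v n <> 0).
  { intros E. rewrite E in Hmn. pose proof (pow2_ge_0 (v m)). lra. }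
  assert (Hle : (q <= Z.abs_nat n)%nat) by (apply Hmin; exists n; auto).
  pose proof (equilibrium_abs_lt alpha v n k' He Hn Hk' Hnk). lia.
Qed.

Lemma unstable_of_sq_lt (alpha : R) (v : Z -> R) (m k : Z) : equilibrium alpha v ->
  v m <> 0 -> v k <> 0 -> (v m)^2 < (v k)^2 -> unstable alpha v.
Proof.
  intros He Hm Hk Hlt.
  destruct (exists_next_sq alpha v m k He Hk Hlt) as [k' [Hk' [Hlt' Hgap]]].
  destruct (equilibrium_finite_support alpha v He) as [K HK].
  destruct (secular_eigenvector v K m k' HK Hm Hk' Hlt' Hgap)
    as [z [th [Hz [Hth [Hthm [Hsupp Heig]]]]]].
  exists z. split; [exact Hz|].
  exact (lin_eigenvalue_on_support alpha z v th m He Hth Hthm Hsupp Heig).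
Qed.

Lemma unstable_of_two_components (alpha : R) (v : Z -> R) : equilibrium alpha v ->
  (exists m k : Z, m <> k /\ v m <> 0 /\ v k <> 0) -> unstable alpha v.
Proof.
  intros He [m [k [Hmk [Hm Hk]]]].
  destruct (Rtotal_order ((v m)^2) ((v k)^2)) as [Hlt|[Heq|Hgt]].
  - exact (unstable_of_sq_lt alpha v m k He Hm Hk Hlt).
  - exact (unstable_of_sq_eq alpha v m k He Hmk Hm Hk Heq).
  - exact (unstable_of_sq_lt alpha v k m He Hk Hm Hgt).
Qed.

Lemma one_component_of_stable (alpha : R) (v : Z -> R) : 0 < alpha ->
  equilibrium alpha v -> stable alpha v ->
  exists k, v k <> 0 /\ (forall n, n <> k -> v n = 0) /\ (IZR k)^2 < alpha / 2.
Proof.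
  intros Halpha He Hs.
  assert (Hoff : forall p, v p = 0 -> alpha - (IZR p)^2 - 2 * normH2 v < 0).
  { intros p Hp. apply Hs, lin_eigenvalue_unit_vec, Hp. }
  destruct (classic (exists k, v k <> 0)) as [[k Hk]|Hzero].
  - assert (Hother : forall n, n <> k -> v n = 0).
    { intros n Hnk. destruct (Req_dec (v n) 0) as [E|E]; [exact E|exfalso].
      destruct (unstable_of_two_components alpha v He) as [lam [Hlam Heig]];
        [exists n, k; auto|].
      pose proof (Hs lam Heig). lra. }
    exists k. split; [exact Hk|split; [exact Hother|]].
    pose proof (one_component_norm alpha v k He Hk Hother) as HN.
    destruct (Z.eq_dec k 0) as [->|Hk0]; [simpl; lra|].
    pose proof (Hoff 0%Z (Hother 0%Z (not_eq_sym Hk0))). simpl in *. lra.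
  - assert (Hv0 : forall n, v n = 0).
    { intros n. destruct (Req_dec (v n) 0) as [E|E]; [exact E|exfalso; eauto]. }
    assert (HN : normH2 v = 0).
    { replace 0 with ((v 0%Z)^2) by (rewrite Hv0; ring).
      apply is_series_unique, (is_series_zseries_single (fun n => (v n)^2)).
      intros n _. rewrite Hv0. ring. }
    pose proof (Hoff 0%Z (Hv0 0%Z)). simpl in *. lra.
Qed.

Lemma stable_of_one_component (alpha : R) (v : Z -> R) (k : Z) : equilibrium alpha v ->
  v k <> 0 -> (forall n, n <> k -> v n = 0) -> (IZR k)^2 < alpha / 2 -> stable alpha v.
Proof.
  intros He Hk Hother Hkalpha lam [th [_ [[p Hp] Heig]]].
  pose proof (one_component_norm alpha v k He Hk Hother) as HN.
  assert (Hin : innerH v th = v k * th k).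
  { apply is_series_unique, (is_series_zseries_single (fun n => v n * th n)).
    intros n Hn. rewrite Hother by exact Hn. ring. }
  specialize (Heig p). destruct (Z.eq_dec p k) as [->|Hpk].
  - rewrite linop_on_support, Hin in Heig by assumption.
    assert (lam = - 2 * (v k)^2) by (apply (Rmult_eq_reg_r (th k)); [lra|exact Hp]).
    pose proof (pow2_gt_0 _ Hk). lra.
  - unfold linop in Heig. rewrite (Hother p Hpk) in Heig.
    assert (lam = alpha - (IZR p)^2 - 2 * normH2 v)
      by (apply (Rmult_eq_reg_r (th p)); [lra|exact Hp]).
    pose proof (pow2_ge_0 (IZR p)). lra.
Qed.

Theorem lemma5p2 (alpha : R) (Halpha : 0 < alpha) :
  (forall v : Z -> R, equilibrium alpha v ->
     (exists m k : Z, m <> k /\ v m <> 0 /\ v k <> 0) ->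
     unstable alpha v)
  /\
  (forall v : Z -> R, equilibrium alpha v ->
     (stable alpha v <->
      exists k : Z, v k <> 0 /\ (forall n, n <> k -> v n = 0) /\
                    (IZR k)^2 < alpha / 2)).
Proof.
  split; [exact (unstable_of_two_components alpha)|].
  intros v He. split.
  - exact (one_component_of_stable alpha v Halpha He).
  - intros [k [Hk [Hother Hkalpha]]].
    exact (stable_of_one_component alpha v k He Hk Hother Hkalpha).
Qed.
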